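(* Let $\rho>\chi>1$ and suppose there exists a $(\rho,\chi)$-bidding profile $G$. Let $\phi:(0,1]\to[1,\infty)$ be the function inducing $G$ (i.e. $\phi=G|_{(0,1]}$). Then there exists a tight $(\rho,\chi')$-bidding profile $G'$ induced by $\phi$ with $\chi'\le\chi$.
   Context: Given $1<\chi\le\rho$, a $(\rho,\chi)$-bidding profile is a non-decreasing, left-continuous $G:\mathbb{R}\to(0,\infty)$ such that (offset) $G(x)<1$ for $x<0$ and $G(x)\ge 1$ for $x>0$; (robustness) $\int_{-\infty}^{x+1}G(t)\,\mathrm{d} t\le\rho G(x)$ for all $x\in\mathbb{R}$; (consistency) $\int_{-\infty}^1G(t)\,\mathrm{d} t\le\chi$. A bidding profile $G$ is induced by $\phi:(0,1]\to[1,\infty)$ if $G|_{(0,1]}\equiv\phi$. A $(\rho,\chi)$-bidding profile $G$ is tight if additionally $\int_{-\infty}^{x+1}G(t)\,\mathrm{d} t=\rho\,G(x)$ for all $x\le 0$ and $\int_{-\infty}^1G(t)\,\mathrm{d} t=\chi$. *)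

From HB Require Import structures.
From mathcomp Require Import all_boot all_order all_algebra.
From mathcomp Require Import all_classical all_reals all_analysis.
Set Implicit Arguments. Unset Strict Implicit. Unset Printing Implicit Defensive.
Import Order.TTheory GRing.Theory Num.Theory.
Import numFieldNormedType.Exports.
Local Open Scope classical_set_scope.
Local Open Scope ring_scope.

Definition int_upto {R : realType} (G : R -> R) (a : R) : \bar R :=
  (\int[@lebesgue_measure R]_(t in `]-oo, a]) (G t)%:E)%E.

Definition bidding_profile {R : realType} (rho chi : R) (G : R -> R) : Prop :=
  [/\ (1 < chi /\ chi <= rho) /\ (forall x, 0 < G x),
      ({homo G : x y / x <= y} /\ forall x, G t @[t --> x^'-] --> G x),
      ((forall x, x < 0 -> G x < 1) /\ (forall x, (0 < x) -> (1 <= G x))),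
      (forall x, (int_upto G (x + 1) <= (rho * G x)%:E)%E)
    & (int_upto G 1 <= chi%:E)%E].

Definition tight_bidding_profile {R : realType} (rho chi : R) (G : R -> R) : Prop :=
  [/\ bidding_profile rho chi G,
      (forall x, x <= 0 -> int_upto G (x + 1) = (rho * G x)%:E)
    & int_upto G 1 = chi%:E].

Definition induced_by {R : realType} (phi : R -> R) (G : R -> R) : Prop :=
  forall x, 0 < x <= 1 -> G x = phi x.

From mathcomp Require Import all_boot all_order all_algebra.
From mathcomp Require Import all_classical all_reals all_analysis.
From mathcomp Require Import measurable_realfun lra.
Import Order.TTheory GRing.Theory Num.Theory.
Import numFieldNormedType.Exports.
Local Open Scope ring_scope.
Local Open Scope classical_set_scope.

(** Call a nondecreasing [H] with [0 <= H <= G] and [H = G] on [(0, +oo)]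
    prefixed when [T H <= H], where [T H x = rho^-1 \int_{-oo}^{x+1} H] for
    [x <= 0] and [T H x = G x] for [x > 0]; [T] is monotone and [G] is prefixed.
    As in the Knaster-Tarski theorem, the pointwise infimum [F] of all prefixed
    functions is a fixed point of [T], i.e. robustness holds with equality on
    [(-oo, 0]], while [F = G = phi] on [(0, 1]] and
    [\int_{-oo}^1 F <= \int_{-oo}^1 G <= chi].  The fixed-point equation makes
    [F] Lipschitz on [(-oo, 0]], hence left-continuous, and yields
    [rho F(x) >= F(x + 1/2) / 2], which propagates positivity from [(0, +oo)]
    to the whole line. *)

Lemma integral_itvoc_cst {R : realType} {a b : R} (c : R) : a <= b ->
  (\int[@lebesgue_measure R]_(t in `]a, b]) c%:E = (c * (b - a))%:E)%E.
Proof.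
move=> ab; rewrite integral_cst //.
have := lebesgue_measure_itv (Interval (BRight a) (BRight b)); rewrite /= lte_fin => ->.
have [_|ba] := ltP a b; first by rewrite -EFinD -EFinM.
have -> : b = a by apply/le_anti; rewrite ab ba.
by rewrite subrr mulr0 mule0.
Qed.

Section IntegralNondecreasing.
Context {R : realType} {H : R -> R}.
Hypotheses (H_ge0 : forall x, 0 <= H x) (H_nd : {homo H : x y / x <= y}).

Lemma measurable_nondecreasing (D : set R) :
  measurable D -> measurable_fun D (EFin \o H).
Proof. by move=> mD; apply/measurable_EFinP; exact: nondecreasing_measurable. Qed.

Lemma int_upto_ge0 a : (0 <= int_upto H a)%E.
Proof. by apply: integral_ge0 => x _; rewrite lee_fin. Qed.

Lemma int_upto_split {a b : R} : a <= b ->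
  int_upto H b =
  (int_upto H a + \int[@lebesgue_measure R]_(t in `]a, b]) (H t)%:E)%E.
Proof.
move=> ab; rewrite /int_upto (@itv_bndbnd_setU _ _ _ (BRight a)) //.
rewrite ge0_integral_setU //.
- by rewrite -itv_bndbnd_setU ?bnd_simp //; exact: measurable_nondecreasing.
- by move=> x _; rewrite lee_fin.
- rewrite disj_set2E; apply/eqP/seteqP; split => x //= [].
  by rewrite !in_itv /= => xa /andP[ax _]; move: (lt_le_trans ax xa); rewrite ltxx.
Qed.

Lemma int_upto_ge_step {a b c : R} : a <= b -> 0 <= c ->
  (forall t, a < t <= b -> c <= H t) ->
  (int_upto H a + (c * (b - a))%:E <= int_upto H b)%E.
Proof.
move=> ab c0 Hc_lb; rewrite (int_upto_split ab) -(integral_itvoc_cst c ab).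
by apply: leeD2l; apply: ge0_le_integral => //; exact: measurable_nondecreasing.
Qed.

Lemma int_upto_le_step {a b c : R} : a <= b -> 0 <= c ->
  (forall t, a < t <= b -> H t <= c) ->
  (int_upto H b <= int_upto H a + (c * (b - a))%:E)%E.
Proof.
move=> ab c0 Hc_ub; rewrite (int_upto_split ab) -(integral_itvoc_cst c ab).
apply: leeD2l; apply: ge0_le_integral => //; last exact: measurable_nondecreasing.
by move=> x _; rewrite lee_fin.
Qed.

Lemma int_upto_nondecreasing : {homo int_upto H : a b / a <= b >-> (a <= b)%E}.
Proof.
move=> a b ab; have := int_upto_ge_step ab (lexx 0) (fun t _ => H_ge0 t).
by rewrite mul0r adde0.
Qed.

End IntegralNondecreasing.

Lemma le_int_upto {R : realType} {H1 H2 : R -> R} {a : R} :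
  (forall x, 0 <= H1 x) -> {homo H1 : x y / x <= y} -> {homo H2 : x y / x <= y} ->
  (forall x, x <= a -> H1 x <= H2 x) -> (int_upto H1 a <= int_upto H2 a)%E.
Proof.
move=> H1_ge0 H1_nd H2_nd le12; apply: ge0_le_integral => //;
  [by move=> x _; rewrite lee_fin | exact: measurable_nondecreasing..].
Qed.

Section LeastPrefixedPoint.
Context {R : realType} {rho chi : R} {G : R -> R}.
Hypothesis G_profile : bidding_profile rho chi G.

Definition admissible (H : R -> R) : Prop :=
  [/\ forall x, 0 <= H x, forall x, H x <= G x, {homo H : x y / x <= y}
    & forall x, 0 < x -> H x = G x].

(* For admissible [H] the integral is at most [chi], so [fine] loses nothing. *)
Definition tighten (H : R -> R) (x : R) : R :=
  if x <= 0 then fine (int_upto H (x + 1)) / rho else G x.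

Definition prefixed (H : R -> R) : Prop :=
  admissible H /\ forall x, tighten H x <= H x.

Definition least_prefixed (x : R) : R := inf [set H x | H in prefixed].

Let rho_gt0 : 0 < rho.
Proof. by have [[[chi_gt1 chi_le_rho] _] _ _ _ _] := G_profile; lra. Qed.

Let G_gt0 x : 0 < G x.
Proof. by have [[_ G_gt0] _ _ _ _] := G_profile. Qed.

Let G_nd : {homo G : x y / x <= y}.
Proof. by have [_ [G_nd _] _ _ _] := G_profile. Qed.

Lemma admissible_int_upto_le {H : R -> R} {a : R} :
  admissible H -> a <= 1 -> (int_upto H a <= chi%:E)%E.
Proof.
move=> [H_ge0 HG H_nd _] a_le1; have [_ _ _ _ G_cons] := G_profile.
apply: le_trans (le_int_upto H_ge0 H_nd G_nd (fun x _ => HG x)) _.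
apply: le_trans G_cons.
exact: int_upto_nondecreasing (fun x => ltW (G_gt0 x)) G_nd _ _ a_le1.
Qed.

Lemma admissible_int_upto_fin {H : R -> R} {a : R} :
  admissible H -> a <= 1 -> int_upto H a \is a fin_num.
Proof.
move=> adH a_le1; have [H_ge0 _ _ _] := adH.
rewrite ge0_fin_numE ?int_upto_ge0 //.
exact: le_lt_trans (admissible_int_upto_le adH a_le1) (ltry _).
Qed.

Lemma tighten_le {H1 H2 : R -> R} : admissible H1 -> admissible H2 ->
  (forall x, H1 x <= H2 x) -> forall x, tighten H1 x <= tighten H2 x.
Proof.
move=> ad1 ad2 le12 x; rewrite /tighten; case: ifP => // x_le0.
have x1_le1 : x + 1 <= 1 by rewrite gerDr.
rewrite ler_pM2r ?invr_gt0 //; apply: fine_le; try exact: admissible_int_upto_fin.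
by have [H1_ge0 _ H1_nd _] := ad1; have [_ _ H2_nd _] := ad2; exact: le_int_upto.
Qed.

Lemma admissible_tighten H : prefixed H -> admissible (tighten H).
Proof.
move=> [adH TH]; have [H_ge0 HG H_nd _] := adH.
have tighten_pos x : 0 < x -> tighten H x = G x by rewrite /tighten leNgt => ->.
split=> [x | x | x y xy | //].
- rewrite /tighten; case: ifP => _; last exact: ltW.
  by rewrite divr_ge0 ?(ltW rho_gt0) // fine_ge0 // int_upto_ge0.
- exact: le_trans (TH x) (HG x).
- have [y_gt0|y_le0] := ltP 0 y.
    by rewrite (tighten_pos y) //; apply: le_trans (TH x) (le_trans (HG x) (G_nd _ _ xy)).
  have x_le0 := le_trans xy y_le0.
  rewrite /tighten x_le0 y_le0 ler_pM2r ?invr_gt0 //.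
  apply: fine_le; try by apply: admissible_int_upto_fin; rewrite // gerDr.
  by apply: int_upto_nondecreasing; rewrite // lerD2r.
Qed.

Lemma prefixed_G : prefixed G.
Proof.
have [_ _ _ G_rob _] := G_profile.
have adG : admissible G by split=> // x; exact: ltW.
split=> // x; rewrite /tighten; case: ifP => // x_le0.
rewrite ler_pdivrMr // mulrC -lee_fin fineK //.
by apply: admissible_int_upto_fin; rewrite // gerDr.
Qed.

Lemma least_prefixed_le {H : R -> R} x : prefixed H -> least_prefixed x <= H x.
Proof.
move=> preH; apply: ge_inf; last by exists H.
by exists 0 => _ [K [[K_ge0 _ _ _] _] <-].
Qed.

Lemma le_least_prefixed c x :
  (forall H, prefixed H -> c <= H x) -> c <= least_prefixed x.
Proof.
move=> c_lb; apply: lb_le_inf; first by exists (G x), G; first exact: prefixed_G.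
by move=> _ [H preH <-]; exact: c_lb.
Qed.

Lemma admissible_least_prefixed : admissible least_prefixed.
Proof.
split=> [x | x | x y xy | x x_gt0].
- by apply: le_least_prefixed => H [[H_ge0 _ _ _] _].
- exact: least_prefixed_le x prefixed_G.
- apply: le_least_prefixed => H preH; have [[_ _ H_nd _] _] := preH.
  exact: le_trans (least_prefixed_le x preH) (H_nd _ _ xy).
- apply/le_anti; rewrite (least_prefixed_le x prefixed_G) /=.
  by apply: le_least_prefixed => H [[_ _ _ HG] _]; rewrite HG.
Qed.

Lemma tighten_least_prefixed x : tighten least_prefixed x = least_prefixed x.
Proof.
have T_le y : tighten least_prefixed y <= least_prefixed y.
  apply: le_least_prefixed => H [adH TH]; apply: le_trans (TH y).
  by apply: (tighten_le admissible_least_prefixed adH) => z; exact: least_prefixed_le.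
have preF : prefixed least_prefixed by split; [exact: admissible_least_prefixed|].
apply/le_anti; rewrite T_le least_prefixed_le //; split.
  exact: admissible_tighten.
by apply: tighten_le; [exact: admissible_tighten | exact: admissible_least_prefixed|].
Qed.

Local Notation F := least_prefixed.

Let F_ge0 x : 0 <= F x.
Proof. by have [F_ge0 _ _ _] := admissible_least_prefixed. Qed.

Let F_nd : {homo F : x y / x <= y}.
Proof. by have [_ _ F_nd _] := admissible_least_prefixed. Qed.

Let F_pos x : 0 < x -> F x = G x.
Proof. by have [_ _ _ F_pos] := admissible_least_prefixed; exact: F_pos. Qed.

Lemma int_upto_least_prefixed x : x <= 0 -> int_upto F (x + 1) = (rho * F x)%:E.
Proof.
move=> x_le0; rewrite -[in RHS]tighten_least_prefixed /tighten x_le0.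
rewrite mulrC divfK ?gt_eqF // fineK //.
by apply: admissible_int_upto_fin admissible_least_prefixed _; rewrite gerDr.
Qed.

Lemma least_prefixed_half_step x : x <= 0 -> F (x + 2^-1) / 2 <= rho * F x.
Proof.
move=> x_le0; rewrite -lee_fin -int_upto_least_prefixed //.
have F_lb t : x + 2^-1 < t <= x + 1 -> F (x + 2^-1) <= F t.
  by case/andP => /ltW + _; exact: F_nd.
have half_le1 : x + 2^-1 <= x + 1 by lra.
have := int_upto_ge_step F_ge0 F_nd half_le1 (F_ge0 _) F_lb.
rewrite (_ : x + 1 - (x + 2^-1) = 2^-1); last lra.
by apply: le_trans; rewrite leeDr // int_upto_ge0.
Qed.

Lemma least_prefixed_gt0 x : 0 < F x.
Proof.
suff F_gt0 n : forall y, - n%:R < 2 * y -> 0 < F y.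
  have /ltr_normlP[Nx_lt _] := archi_boundP (normr_ge0 (2 * x)).
  by apply: (F_gt0 (Num.Def.archi_bound `|2 * x|)); lra.
elim: n => [|n IHn] y y_gt.
  by rewrite F_pos ?G_gt0 //; lra.
have [y_gt0|y_le0] := ltP 0 y; first by rewrite F_pos ?G_gt0.
have Fhalf_gt0 : 0 < F (y + 2^-1) by apply: IHn; move: y_gt; rewrite -natr1; lra.
have := least_prefixed_half_step y y_le0; rewrite -(pmulr_rgt0 _ rho_gt0).
by apply: lt_le_trans; rewrite divr_gt0.
Qed.

Lemma least_prefixed_lipschitz t x :
  t <= x -> x <= 0 -> rho * (F x - F t) <= G 1 * (x - t).
Proof.
move=> tx x_le0; have t_le0 := le_trans tx x_le0.
have F_ub s : t + 1 < s <= x + 1 -> F s <= G 1.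
  case/andP=> _ s_le; have [_ FG _ _] := admissible_least_prefixed.
  by apply: le_trans (FG s) (G_nd _ _ _); lra.
have t1_le : t + 1 <= x + 1 by rewrite lerD2r.
have := int_upto_le_step F_ge0 F_nd t1_le (ltW (G_gt0 1)) F_ub.
by rewrite !int_upto_least_prefixed // -EFinD lee_fin; lra.
Qed.

Lemma least_prefixed_left_cont x : F t @[t --> x^'-] --> F x.
Proof.
have [x_gt0|x_le0] := ltP 0 x.
  rewrite F_pos //; have [_ [_ G_lcont] _ _ _] := G_profile.
  apply: cvg_trans (G_lcont x); apply: near_eq_cvg.
  by near=> t; rewrite F_pos //; near: t; exact: nbhs_left_gt.
apply/cvgrPdist_le => e e_gt0.
have d_gt0 : 0 < e * rho / G 1 by rewrite divr_gt0 ?mulr_gt0.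
near=> t.
have tx : t < x by near: t; exact: nbhs_left_lt.
have xt_lt : x - t < e * rho / G 1 by near: t; exact: nbhs_left_ltBl.
have := least_prefixed_lipschitz _ _ (ltW tx) x_le0.
rewrite ltr_pdivlMr ?G_gt0 // in xt_lt => lip.
rewrite ger0_norm; last by rewrite subr_ge0 F_nd // ltW.
by apply/ltW; rewrite -(ltr_pM2l rho_gt0); lra.
Unshelve. all: by end_near.
Qed.

Lemma int_upto_least_prefixed1_gt1 : (1 < int_upto F 1)%E.
Proof.
have F_ge1 t : 0 < t <= 1 -> 1 <= F t.
  by case/andP=> t_gt0 _; have [_ _ [_ G_ge1] _ _] := G_profile; rewrite F_pos ?G_ge1.
apply: lt_le_trans (int_upto_ge_step F_ge0 F_nd ler01 ler01 F_ge1).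
rewrite subr0 mul1r lteDr // -[X in int_upto _ X](addNr 1).
by rewrite int_upto_least_prefixed ?lerN10 // lte_fin mulr_gt0 ?least_prefixed_gt0.
Qed.

Lemma int_upto_least_prefixed1_fin : int_upto F 1 \is a fin_num.
Proof. exact: admissible_int_upto_fin admissible_least_prefixed (lexx 1). Qed.

Lemma fine_int_upto_least_prefixed1_le : fine (int_upto F 1) <= chi.
Proof.
rewrite -lee_fin fineK ?int_upto_least_prefixed1_fin //.
exact: admissible_int_upto_le admissible_least_prefixed _.
Qed.

Lemma least_prefixed_induced phi : induced_by phi G -> induced_by phi F.
Proof. by move=> G_phi x x01; have /andP[x_gt0 _] := x01; rewrite F_pos ?G_phi. Qed.

Lemma tight_least_prefixed : tight_bidding_profile rho (fine (int_upto F 1)) F.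
Proof.
have [[[_ chi_le_rho] _] _ [G_lt1 _] G_rob _] := G_profile.
have [_ FG _ _] := admissible_least_prefixed.
have F1E := fineK int_upto_least_prefixed1_fin.
split; [split | exact: int_upto_least_prefixed | by rewrite F1E].
- split; last exact: least_prefixed_gt0.
  split; last exact: le_trans fine_int_upto_least_prefixed1_le chi_le_rho.
  by rewrite -lte_fin F1E int_upto_least_prefixed1_gt1.
- by split; [exact: F_nd | exact: least_prefixed_left_cont].
- split=> x x_sgn; first exact: le_lt_trans (FG x) (G_lt1 x x_sgn).
  by have [_ _ [_ G_ge1] _ _] := G_profile; rewrite F_pos ?G_ge1.
- move=> x; have [x_gt0|x_le0] := ltP 0 x; last by rewrite int_upto_least_prefixed.
  rewrite F_pos //; apply: le_trans (G_rob x).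
  exact: le_int_upto F_ge0 F_nd G_nd (fun t _ => FG t).
- by rewrite F1E.
Qed.

End LeastPrefixedPoint.

Theorem lemma2 (R : realType) (rho chi : R) (G : R -> R) :
  1 < chi -> chi < rho ->
  bidding_profile rho chi G ->
  forall phi : R -> R, induced_by phi G ->
  exists (chi' : R) (G' : R -> R),
    [/\ chi' <= chi, tight_bidding_profile rho chi' G' & induced_by phi G'].
Proof.
(* [1 < chi <= rho] is already part of [bidding_profile rho chi G]. *)
move=> _ _ G_profile phi G_phi.
exists (fine (int_upto (@least_prefixed R rho G) 1)), (@least_prefixed R rho G); split.
- exact: fine_int_upto_least_prefixed1_le G_profile.
- exact: tight_least_prefixed G_profile.
- exact: least_prefixed_induced G_profile _ G_phi.
Qed.
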